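(* For any connected graphs $G$ and $H$, $dim_s(G\square H)\ge dim_s(G)\,dim_s(H)$.
   Context: Graphs are finite, simple, undirected; for connected $G$, $d_G$ is the shortest-path distance and $I_G[u,v]$ is the set of vertices lying on some shortest $u$–$v$ path. A vertex $w$ strongly resolves vertices $u,v$ if $v\in I_G[u,w]$ or $u\in I_G[v,w]$. A strong resolving set of $G$ is a set $S\subseteq V(G)$ such that every pair of vertices is strongly resolved by some vertex of $S$; $dim_s(G)$ is the minimum cardinality of such a set. $G\square H$ denotes the Cartesian product: vertex set $V(G)\times V(H)$, $(a,b)\sim(c,d)$ iff ($a=c$ and $bd\in E(H)$) or ($b=d$ and $ac\in E(G)$). *)

From mathcomp Require Import all_boot.
Set Implicit Arguments. Unset Strict Implicit. Unset Printing Implicit Defensive.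

Definition simple_graph (T : finType) (e : rel T) : Prop :=
  symmetric e /\ irreflexive e.

Definition connected_graph (T : finType) (e : rel T) : Prop :=
  forall x y : T, connect e x y.

Fixpoint nball (T : finType) (e : rel T) (x : T) (n : nat) : {set T} :=
  match n with
  | 0 => [set x]
  | n'.+1 => nball e x n' :|: [set y | [exists z in nball e x n', e z y]]
  end.

(* Shortest path distance (correct for connected graphs: every distance
   is < #|T|). *)
Definition gdist (T : finType) (e : rel T) (x y : T) : nat :=
  find (fun n => y \in nball e x n) (iota 0 #|T|).

Definition in_interval (T : finType) (e : rel T) (u v w : T) : bool :=
  gdist e u w + gdist e w v == gdist e u v.

Definition strongly_resolves (T : finType) (e : rel T) (w u v : T) : bool :=
  in_interval e u w v || in_interval e v w u.

Definition strong_resolving_set (T : finType) (e : rel T) (S : {set T}) : bool :=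
  [forall u, forall v, (u != v) ==> [exists w in S, strongly_resolves e w u v]].

Definition sdim (T : finType) (e : rel T) : nat :=
  find (fun n => [exists S : {set T}, strong_resolving_set e S && (#|S| == n)])
       (iota 0 #|T|.+1).

Definition cart_prod (T1 T2 : finType) (e1 : rel T1) (e2 : rel T2) : rel (T1 * T2) :=
  fun p q => ((p.1 == q.1) && e2 p.2 q.2) || ((p.2 == q.2) && e1 p.1 q.1).

From mathcomp Require Import all_boot zify.
Set Implicit Arguments. Unset Strict Implicit. Unset Printing Implicit Defensive.

(* In a connected graph, the strong resolving sets are exactly the vertex
   covers of the strong resolving graph, whose edges join mutually maximally
   distant vertices; so dim_s(G) is its vertex cover number.  Distances add
   in G □ H, hence (g,h),(g',h') are mutually maximally distant as soon as g,g'
   and h,h' are, and a strong resolving set S of G □ H covers all those pairs.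
   Fix a minimum vertex cover P of the strong resolving graph of G.  For p in P,
   the vertices h such that (p,h) is in S or every neighbour q of p has (q,h)
   in S cover the strong resolving graph of H, so there are at least dim_s(H)
   of them.  Counting the pairs (p,h) by h instead, an exchange argument with
   the minimality of P bounds the contribution of each h by the size of the
   fibre of S over h, so |S| >= dim_s(G) dim_s(H). *)

Definition vertex_cover (T : finType) (M : rel T) (X : {set T}) : bool :=
  [forall u, forall v, (M u v && (u != v)) ==> (u \in X) || (v \in X)].

Lemma vertex_coverP (T : finType) (M : rel T) (X : {set T}) :
  reflect (forall u v, M u v -> u != v -> (u \in X) || (v \in X)) (vertex_cover M X).
Proof.
apply: (iffP forallP) => X_cov.
  by move=> u v Muv u_v; have /forallP/(_ v)/implyP := X_cov u; apply; rewrite Muv.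
by move=> u; apply/forallP => v; apply/implyP => /andP [Muv u_v]; apply: X_cov.
Qed.

Section Distance.
Variables (T : finType) (e : rel T).
Local Notation D := (gdist e).

Lemma nballS x n y :
  (y \in nball e x n.+1) = (y \in nball e x n) || [exists z in nball e x n, e z y].
Proof. by rewrite /= !inE. Qed.

Lemma subset_nball x m n : m <= n -> {subset nball e x m <= nball e x n}.
Proof.
elim: n => [|n IHn]; first by rewrite leqn0 => /eqP ->.
rewrite leq_eqVlt => /orP [/eqP -> //|lt_mn] y y_m.
by rewrite nballS (IHn lt_mn y y_m).
Qed.

Lemma last_path_nball x p : path e x p -> last x p \in nball e x (size p).
Proof.
elim/last_ind: p => [|p z IHp]; first by rewrite /= inE.
rewrite rcons_path => /andP [xp ez].
rewrite last_rcons size_rcons nballS; apply/orP; right.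
by apply/existsP; exists (last x p); rewrite IHp.
Qed.

Lemma nball_connect x n y : y \in nball e x n -> connect e x y.
Proof.
elim: n y => [|n IHn] y; first by rewrite /= inE => /eqP ->; exact: connect0.
rewrite nballS => /orP [/IHn //|/existsP [z /andP [z_n ezy]]].
exact: connect_trans (IHn _ z_n) (connect1 ezy).
Qed.

Lemma lipschitz_le_nball (f : T -> nat) x :
  f x = 0 -> (forall a b, e a b -> f b <= (f a).+1) ->
  forall n y, y \in nball e x n -> f y <= n.
Proof.
move=> fx0 f_lip; elim=> [|n IHn] y; first by rewrite /= inE => /eqP ->; rewrite fx0.
rewrite nballS => /orP [/IHn|/existsP [z /andP [/IHn fz ezy]]]; first lia.
by have := f_lip _ _ ezy; lia.
Qed.

Hypothesis e_conn : connected_graph e.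

Lemma has_nball x y : has (fun n => y \in nball e x n) (iota 0 #|T|).
Proof.
have /connectP [p xp ->] := e_conn x y.
have [p' xp' p'_uniq _] := shortenP xp.
apply/hasP; exists (size p'); last exact: last_path_nball.
rewrite mem_iota /= -ltnS -[(size p').+1]/(size (x :: p')).
by rewrite -(card_uniqP p'_uniq) ltnS max_card.
Qed.

Lemma gdist_lt_card x y : D x y < #|T|.
Proof. by have := has_nball x y; rewrite has_find size_iota. Qed.

Lemma mem_nball x n y : (y \in nball e x n) = (D x y <= n).
Proof.
have in_D : y \in nball e x (D x y).
  by have := nth_find 0 (has_nball x y); rewrite nth_iota ?gdist_lt_card.
apply/idP/idP => [y_n|le_Dn]; last exact: subset_nball le_Dn _ in_D.
rewrite leqNgt; apply/negP => lt_nD.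
have := before_find 0 lt_nD; rewrite nth_iota ?add0n ?y_n //.
exact: ltn_trans lt_nD (gdist_lt_card x y).
Qed.

Lemma gdist_xx x : D x x = 0.
Proof. by apply/eqP; rewrite -leqn0 -mem_nball /= inE. Qed.

Lemma gdist_eq0 x y : (D x y == 0) = (x == y).
Proof. by rewrite -leqn0 -mem_nball /= inE eq_sym. Qed.

Lemma gdist_le_adj x y z : e y z -> D x z <= (D x y).+1.
Proof.
move=> eyz; rewrite -mem_nball nballS; apply/orP; right.
by apply/existsP; exists y; rewrite mem_nball leqnn.
Qed.

Lemma gdist_penultimate x z n : D x z = n.+1 -> exists2 y, D x y = n & e y z.
Proof.
move=> Dxz; have := leqnn n.+1; rewrite -{1}Dxz -mem_nball nballS.
case/orP => [|/existsP [y /andP [y_n eyz]]]; first by rewrite mem_nball Dxz ltnn.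
exists y => //; rewrite mem_nball in y_n.
by have := gdist_le_adj x eyz; lia.
Qed.

Lemma lipschitz_le_gdist (f : T -> nat) x :
  f x = 0 -> (forall a b, e a b -> f b <= (f a).+1) -> forall y, f y <= D x y.
Proof.
by move=> fx0 f_lip y; apply: (lipschitz_le_nball fx0 f_lip); rewrite mem_nball.
Qed.

Lemma gdist_triangle x y z : D x z <= D x y + D y z.
Proof.
suff : D x z - D x y <= D y z by lia.
apply: (@lipschitz_le_gdist (fun w => D x w - D x y)) => /= [|a b eab].
  by rewrite subnn.
by have := gdist_le_adj x eab; lia.
Qed.

Hypothesis e_sym : symmetric e.

Lemma gdist_sym x y : D x y = D y x.
Proof.
suff le_D a b : D b a <= D a b by apply/eqP; rewrite eqn_leq !le_D.
apply: (@lipschitz_le_gdist (fun c => D c a)) => [|c d ecd]; first exact: gdist_xx.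
have edc : e d c by rewrite e_sym.
by have := gdist_triangle d c a; have := gdist_le_adj d edc; rewrite gdist_xx; lia.
Qed.

Lemma gdist_first_step y w : y != w -> exists2 z, e y z & (D z w).+1 = D y w.
Proof.
rewrite -gdist_eq0 gdist_sym; case Dwy: (D w y) => [//|n] _.
have [z Dwz ezy] := gdist_penultimate Dwy.
by exists z; [rewrite e_sym | rewrite gdist_sym Dwz].
Qed.

End Distance.

Section StrongResolving.
Variables (T : finType) (e : rel T).
Local Notation D := (gdist e).

Definition maxdist (u v : T) : bool := [forall z, e v z ==> (D u z <= D u v)].

Definition mutually_maxdist (u v : T) : bool := maxdist u v && maxdist v u.

Lemma mutually_maxdist_sym : symmetric mutually_maxdist.
Proof. by move=> u v; rewrite /mutually_maxdist andbC. Qed.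

Hypothesis e_conn : connected_graph e.

Lemma maxdist_extend y u x : D y u + D u x = D y x -> maxdist u x -> maxdist y x.
Proof.
move=> Dyux /forallP ux_max; apply/forallP => z; apply/implyP => exz.
by have := implyP (ux_max z) exz; have := gdist_triangle e_conn y u z; lia.
Qed.

Lemma exists_maxdist_extension a b :
  exists2 x, D a b + D b x = D a x & maxdist a x.
Proof.
have b_ext : D a b + D b b == D a b by rewrite gdist_xx // addn0.
have [x /eqP Dabx x_max] :=
  @arg_maxnP _ b (fun x => D a b + D b x == D a x) (D a) b_ext.
exists x => //; apply/forallP => z; apply/implyP => exz.
rewrite leqNgt; apply/negP => lt_xz.
have Daz := gdist_le_adj e_conn a exz.
have Dbz := gdist_le_adj e_conn b exz.
have Dabz := gdist_triangle e_conn a b z.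
have /x_max : D a b + D b z == D a z by apply/eqP; lia.
lia.
Qed.

Hypothesis e_sym : symmetric e.

Lemma maxdist_geodesic_end u v w : maxdist u v -> D u v + D v w = D u w -> w = v.
Proof.
move=> /forallP v_max Duvw; case: (eqVneq v w) => [//|v_w]; exfalso.
have [z evz Dzw] := gdist_first_step e_conn e_sym v_w.
by have := implyP (v_max z) evz; have := gdist_triangle e_conn u z w; lia.
Qed.

Lemma strong_resolving_vertex_cover S :
  strong_resolving_set e S -> vertex_cover mutually_maxdist S.
Proof.
move=> S_res; apply/vertex_coverP => u v /andP [uv_max vu_max] u_v.
have /existsP [w /andP [w_S]] := implyP (forallP (forallP S_res u) v) u_v.
case/orP => /eqP Dw; first by rewrite -(maxdist_geodesic_end uv_max Dw) w_S orbT.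
by rewrite -(maxdist_geodesic_end vu_max Dw) w_S.
Qed.

(* Extend a geodesic from u through v to a farthest x, then one from x through
   u to a farthest y: x and y are mutually maximally distant and both strongly
   resolve u and v. *)
Lemma exists_mutually_maxdist_resolving u v : u != v ->
  exists x y, [/\ mutually_maxdist x y, x != y,
    strongly_resolves e x u v & strongly_resolves e y u v].
Proof.
move=> u_v; have [x Duvx ux_max] := exists_maxdist_extension u v.
have [y Dxuy xy_max] := exists_maxdist_extension x u.
have Dsym := gdist_sym e_conn e_sym.
have yx_max : maxdist y x.
  by apply: (maxdist_extend _ ux_max); rewrite (Dsym y u) (Dsym y x) (Dsym u x) addnC.
exists x, y; split.
- by rewrite /mutually_maxdist xy_max yx_max.
- have : 0 < D u v by rewrite lt0n gdist_eq0.
  by rewrite -(gdist_eq0 e_conn) -lt0n -Dxuy (Dsym x u) -Duvx; lia.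
- by rewrite /strongly_resolves /in_interval Duvx eqxx.
apply/orP; right; apply/eqP.
have := Dsym x u; have := Dsym v x; have := Dsym u v.
by have := gdist_triangle e_conn x v y; have := gdist_triangle e_conn v u y; lia.
Qed.

Lemma vertex_cover_strong_resolving X :
  vertex_cover mutually_maxdist X -> strong_resolving_set e X.
Proof.
move=> /vertex_coverP X_cov; apply/forallP => u; apply/forallP => v; apply/implyP => u_v.
have [x [y [xy_max x_y x_res y_res]]] := exists_mutually_maxdist_resolving u_v.
by apply/existsP; case/orP: (X_cov x y xy_max x_y) => [x_X|y_X]; [exists x | exists y];
  apply/andP.
Qed.

Lemma setT_strong_resolving : strong_resolving_set e setT.
Proof.
apply/forallP => u; apply/forallP => v; apply/implyP => _; apply/existsP; exists v.
by rewrite inE /strongly_resolves /in_interval gdist_xx // addn0 eqxx.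
Qed.

Lemma sdim_le_card X : strong_resolving_set e X -> sdim e <= #|X|.
Proof.
move=> X_res; rewrite leqNgt; apply/negP => lt_X.
have X_wit : [exists S : {set T}, strong_resolving_set e S && (#|S| == #|X|)].
  by apply/existsP; exists X; rewrite X_res eqxx.
by have := before_find 0 lt_X; rewrite nth_iota ?add0n ?ltnS ?max_card //= X_wit.
Qed.

Lemma sdim_witness : exists2 S, strong_resolving_set e S & #|S| = sdim e.
Proof.
pose P n := [exists S : {set T}, strong_resolving_set e S && (#|S| == n)].
have has_P : has P (iota 0 #|T|.+1).
  apply/hasP; exists #|T|; first by rewrite mem_iota ltnS leqnn.
  by apply/existsP; exists setT; rewrite setT_strong_resolving cardsT eqxx.
have lt_sdim : sdim e < #|T|.+1 by move: has_P; rewrite has_find size_iota.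
have := nth_find 0 has_P; rewrite nth_iota ?add0n //.
by case/existsP => S /andP [S_res /eqP]; exists S.
Qed.

End StrongResolving.

Section CartesianProduct.
Variables (T1 T2 : finType) (e1 : rel T1) (e2 : rel T2).
Local Notation E := (cart_prod e1 e2).

Lemma cart_prod_sym : symmetric e1 -> symmetric e2 -> symmetric E.
Proof.
move=> e1_sym e2_sym [a b] [c d].
by rewrite /cart_prod /= e1_sym e2_sym (eq_sym a) (eq_sym b).
Qed.

Lemma nball_cart_prodl g h n a :
  a \in nball e1 g n -> (a, h) \in nball E (g, h) n.
Proof.
elim: n a => [|n IHn] a; first by rewrite /= !inE => /eqP ->.
rewrite !nballS => /orP [/IHn -> //|/existsP [z /andP [z_n eza]]].
apply/orP; right; apply/existsP; exists (z, h).
by rewrite IHn //= /cart_prod /= eqxx eza orbT.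
Qed.

Lemma nball_cart_prodr g h n b :
  b \in nball e2 h n -> (g, b) \in nball E (g, h) n.
Proof.
elim: n b => [|n IHn] b; first by rewrite /= !inE => /eqP ->.
rewrite !nballS => /orP [/IHn -> //|/existsP [z /andP [z_n ezb]]].
apply/orP; right; apply/existsP; exists (g, z).
by rewrite IHn //= /cart_prod /= eqxx ezb.
Qed.

Hypotheses (e1_conn : connected_graph e1) (e2_conn : connected_graph e2).

Lemma cart_prod_connected : connected_graph E.
Proof.
move=> [g h] [g' h'].
have g_g' : g' \in nball e1 g (gdist e1 g g') by rewrite mem_nball.
have h_h' : h' \in nball e2 h (gdist e2 h h') by rewrite mem_nball.
apply: connect_trans (nball_connect (nball_cart_prodl h g_g')) _.
exact: nball_connect (nball_cart_prodr g' h_h').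
Qed.

Lemma gdist_cart_prod g h g' h' :
  gdist E (g, h) (g', h') = gdist e1 g g' + gdist e2 h h'.
Proof.
apply/eqP; rewrite eqn_leq; apply/andP; split.
  have Dl : gdist E (g, h) (g', h) <= gdist e1 g g'.
    by rewrite -(mem_nball cart_prod_connected) nball_cart_prodl ?(mem_nball e1_conn).
  have Dr : gdist E (g', h) (g', h') <= gdist e2 h h'.
    by rewrite -(mem_nball cart_prod_connected) nball_cart_prodr ?(mem_nball e2_conn).
  by have := gdist_triangle cart_prod_connected (g, h) (g', h) (g', h'); lia.
apply: (@lipschitz_le_gdist _ _ cart_prod_connected
          (fun p => gdist e1 g p.1 + gdist e2 h p.2)) => /= [|[a1 a2] [b1 b2]].
  by rewrite !gdist_xx.
rewrite /cart_prod /= => /orP [] /andP [/eqP <- eab].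
  by have := gdist_le_adj e2_conn h eab; lia.
by have := gdist_le_adj e1_conn g eab; lia.
Qed.

Lemma maxdist_cart_prod g h g' h' :
  maxdist e1 g g' -> maxdist e2 h h' -> maxdist E (g, h) (g', h').
Proof.
move=> /forallP g'_max /forallP h'_max; apply/forallP => -[z1 z2]; apply/implyP.
rewrite /cart_prod /= !gdist_cart_prod => /orP [] /andP [/eqP <- ez].
  by have := implyP (h'_max z2) ez; lia.
by have := implyP (g'_max z1) ez; lia.
Qed.

Lemma mutually_maxdist_cart_prod g h g' h' :
  mutually_maxdist e1 g g' -> mutually_maxdist e2 h h' ->
  mutually_maxdist E (g, h) (g', h').
Proof.
by move=> /andP [gg' g'g] /andP [hh' h'h]; rewrite /mutually_maxdist !maxdist_cart_prod.
Qed.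

End CartesianProduct.

Lemma double_count (I J : finType) (R : I -> J -> bool) :
  \sum_i #|[set j | R i j]| = \sum_j #|[set i | R i j]|.
Proof.
under eq_bigr do rewrite -sum1dep_card.
rewrite (exchange_big_dep predT) //=; apply: eq_bigr => j _.
by rewrite -sum1dep_card.
Qed.

Lemma card_fibers (I J : finType) (S : {set I * J}) :
  #|S| = \sum_i #|[set j | (i, j) \in S]|.
Proof.
under [RHS]eq_bigr do rewrite -sum1dep_card.
by rewrite pair_big_dep /= -sum1_card; apply: eq_bigl => -[i j].
Qed.

Section VertexCover.
Variables (T : finType) (M : rel T).

Definition nbrs_in (Y : {set T}) (p : T) : bool :=
  [forall q, (M p q && (p != q)) ==> (q \in Y)].

Lemma setT_vertex_cover : vertex_cover M setT.
Proof. by apply/vertex_coverP => u v _ _; rewrite inE. Qed.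

Hypothesis M_sym : symmetric M.

(* The vertices of P outside Y whose neighbours all lie in Y can be traded
   for the vertices of Y outside P; a minimum P cannot gain from this trade. *)
Lemma min_vertex_cover_exchange (P Y : {set T}) :
  vertex_cover M P -> (forall X, vertex_cover M X -> #|P| <= #|X|) ->
  #|[set p in P | (p \in Y) || nbrs_in Y p]| <= #|Y|.
Proof.
move=> /vertex_coverP P_cov P_min.
set X0 := [set p in P | (p \notin Y) && nbrs_in Y p].
have X0_P : X0 \subset P by apply/subsetP => p; rewrite inE => /andP [].
have trade x y : x \in X0 -> M x y -> x != y -> y \in (P :\: X0) :|: (Y :\: P).
  rewrite inE => /and3P [_ _ /forallP x_nbrs] Mxy x_y.
  have y_Y : y \in Y by apply: (implyP (x_nbrs y)); rewrite Mxy.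
  have y_X0 : y \notin X0 by rewrite inE y_Y andbF.
  by rewrite in_setU !in_setD y_X0 y_Y; case: (y \in P).
have traded_cov : vertex_cover M ((P :\: X0) :|: (Y :\: P)).
  apply/vertex_coverP => u v Muv u_v; have [u_P|v_P] := orP (P_cov u v Muv u_v).
    case u_X0: (u \in X0); first by rewrite (trade u v) ?orbT.
    by rewrite in_setU in_setD u_X0 u_P.
  have Mvu : M v u by rewrite M_sym.
  case v_X0: (v \in X0); first by rewrite (trade v u) // eq_sym.
  by rewrite [v \in _]in_setU in_setD v_X0 v_P orbT.
have le_X0 : #|X0| <= #|Y :\: P|.
  have := P_min _ traded_cov; have := (leq_card_setU (P :\: X0) (Y :\: P)).1.
  by rewrite -(cardsID X0 P) (setIidPr X0_P); lia.
have -> : [set p in P | (p \in Y) || nbrs_in Y p] = (P :&: Y) :|: X0.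
  by apply/setP => p; rewrite !inE; case: (p \in P); case: (p \in Y).
apply: leq_trans (leq_card_setU _ _).1 _.
by rewrite -(cardsID P Y) setIC leq_add2l.
Qed.

End VertexCover.

Section ProductCover.
Variables (T1 T2 : finType) (M1 : rel T1) (M2 : rel T2) (S : {set T1 * T2}).
Hypothesis M1_sym : symmetric M1.
Hypothesis S_cover : forall g g' h h',
  M1 g g' -> M2 h h' -> h != h' -> ((g, h) \in S) || ((g', h') \in S).

Definition fiber (h : T2) : {set T1} := [set g | (g, h) \in S].

Definition layer (p : T1) : {set T2} :=
  [set h | (p \in fiber h) || nbrs_in M1 (fiber h) p].

Lemma layer_vertex_cover p : vertex_cover M2 (layer p).
Proof.
apply/vertex_coverP => h h' Mhh' h_h'.
case/boolP: (h \in layer p) => [//|]; rewrite !inE negb_or => /andP [_].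
case/forallPn => q; rewrite negb_imply inE => /andP [/andP [Mpq _] q_h].
have Mqp : M1 q p by rewrite M1_sym.
by have := S_cover Mqp Mhh' h_h'; rewrite (negbTE q_h) /= => ->.
Qed.

Variables b1 b2 : nat.
Hypothesis M1_cover_ge : forall X : {set T1}, vertex_cover M1 X -> b1 <= #|X|.
Hypothesis M2_cover_ge : forall X : {set T2}, vertex_cover M2 X -> b2 <= #|X|.

Lemma vertex_cover_mul_le_card : b1 * b2 <= #|S|.
Proof.
have [P P_cov P_min] := arg_minnP (fun X : {set T1} => #|X|) (setT_vertex_cover M1).
have b1b2_le : b1 * b2 <= \sum_(p in P) #|layer p|.
  apply: leq_trans (leq_mul (M1_cover_ge P_cov) (leqnn b2)) _.
  rewrite -sum_nat_const; apply: leq_sum => p _.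
  exact/M2_cover_ge/layer_vertex_cover.
apply: leq_trans b1b2_le _.
have -> : \sum_(p in P) #|layer p| = \sum_p #|[set h | (p \in P) && (h \in layer p)]|.
  rewrite big_mkcond; apply: eq_bigr => p _; case: (p \in P).
    by apply: eq_card => h; rewrite inE.
  by apply/esym/eqP; rewrite cards_eq0; apply/eqP/setP => h; rewrite !inE.
rewrite double_count card_fibers (double_count (fun g h => (g, h) \in S)).
apply: leq_sum => h _.
have -> : [set p in P | h \in layer p] =
          [set p in P | (p \in fiber h) || nbrs_in M1 (fiber h) p].
  by apply/setP => p; rewrite !inE.
exact: min_vertex_cover_exchange.
Qed.

End ProductCover.

Theorem theorem26 (T1 T2 : finType) (e1 : rel T1) (e2 : rel T2) :
  simple_graph e1 -> simple_graph e2 ->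
  connected_graph e1 -> connected_graph e2 ->
  sdim (cart_prod e1 e2) >= sdim e1 * sdim e2.
Proof.
move=> [e1_sym _] [e2_sym _] e1_conn e2_conn.
have E_conn := cart_prod_connected e1_conn e2_conn.
have E_sym := cart_prod_sym e1_sym e2_sym.
have [S S_res <-] := sdim_witness E_conn.
have /vertex_coverP S_cov := strong_resolving_vertex_cover E_conn E_sym S_res.
apply: (@vertex_cover_mul_le_card _ _ (mutually_maxdist e1) (mutually_maxdist e2)).
- exact: mutually_maxdist_sym.
- move=> g g' h h' gg' hh' h_h'; apply: S_cov; first exact: mutually_maxdist_cart_prod.
  by apply: contra h_h' => /eqP [_ ->].
- by move=> X /(vertex_cover_strong_resolving e1_conn e1_sym)/sdim_le_card.
- by move=> X /(vertex_cover_strong_resolving e2_conn e2_sym)/sdim_le_card.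
Qed.
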